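(* For every $h>0$, $$\widetilde\psi(h):=\inf_{b_1,b_2>0}\big\{-(b_1+b_2)\ln(1-p)+\psi(h,b_1,b_2)\big\}=\big(\kappa_\ell(p)+\kappa_r(p)\big)h.$$
   Context: Setting: $(\omega_x^+)_{x\in\mathbb{Z}}$ i.i.d. with law $\mu$, $\omega_x^+\in[\varepsilon_0,1-\varepsilon_0]$ for some $\varepsilon_0>0$, $\omega_x^-=1-\omega_x^+$, $\rho_i=\omega_i^-/\omega_i^+$, $\mathbf{E}$ expectation under $\mu$; strict nestling: $\inf\{a:\mu(\omega_0^+\le a)>0\}<1/2<\sup\{a:\mu(\omega_0^+\ge a)>0\}$; $p\in(0,1)$. $\psi(h,b_1,b_2)=\sup_{\lambda>0}\{\lambda h-b_2\ln\mathbf{E}(\rho_0^\lambda)\}+\sup_{\lambda>0}\{\lambda h-b_1\ln\mathbf{E}(\rho_0^{-\lambda})\}$. $\kappa_\ell(p)>0$ and $\kappa_r(p)>0$ are the unique positive solutions of $\mathbf{E}(\rho_0^{-\kappa_\ell})=\frac{1}{1-p}$ and $\mathbf{E}(\rho_0^{\kappa_r})=\frac{1}{1-p}$. *)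

From Stdlib Require Import Reals.
Open Scope R_scope.

(* The support interval [eps0, 1 - eps0] of the law mu of omega_0^+. *)
Definition inI (eps0 x : R) : Prop := eps0 <= x <= 1 - eps0.

Definition contI (eps0 : R) (f : R -> R) : Prop :=
  forall x, inI eps0 x -> continuity_pt f x.

(* A probability law mu on [eps0, 1-eps0], represented (Riesz-Markov) by its
   expectation functional E f = \int f dmu on continuous functions:
   linear, local (depends only on values on the interval), positive, E 1 = 1. *)
Record law_functional (eps0 : R) (E : (R -> R) -> R) : Prop := {
  lf_linear : forall (a b : R) (f g : R -> R), contI eps0 f -> contI eps0 g ->
      E (fun x => a * f x + b * g x) = a * E f + b * E g;
  lf_local : forall f g : R -> R, (forall x, inI eps0 x -> f x = g x) -> E f = E g;
  lf_pos : forall f : R -> R, contI eps0 f -> (forall x, inI eps0 x -> 0 <= f x) ->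
      0 <= E f;
  lf_one : E (fun _ => 1) = 1 }.

(* rho = omega^- / omega^+ as a function of omega^+ = w. *)
Definition rho (w : R) : R := (1 - w) / w.

(* Strict nestling: inf supp mu < 1/2 < sup supp mu, i.e.
   mu([eps0,a)) > 0 for some a < 1/2 and mu((a,1-eps0]) > 0 for some a > 1/2. *)
Definition strict_nestling (eps0 : R) (E : (R -> R) -> R) : Prop :=
  (exists a, a < 1/2 /\ exists f, contI eps0 f /\
      (forall x, inI eps0 x -> 0 <= f x) /\
      (forall x, inI eps0 x -> a <= x -> f x = 0) /\ 0 < E f) /\
  (exists a, 1/2 < a /\ exists f, contI eps0 f /\
      (forall x, inI eps0 x -> 0 <= f x) /\
      (forall x, inI eps0 x -> x <= a -> f x = 0) /\ 0 < E f).

Definition psi_r_set (E : (R -> R) -> R) (h b : R) : R -> Prop :=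
  fun y => exists l, 0 < l /\ y = l * h - b * ln (E (fun w => Rpower (rho w) l)).

Definition psi_l_set (E : (R -> R) -> R) (h b : R) : R -> Prop :=
  fun y => exists l, 0 < l /\ y = l * h - b * ln (E (fun w => Rpower (rho w) (- l))).

(* The set of finite values of -(b1+b2) ln(1-p) + psi(h,b1,b2), b1,b2 > 0.
   (Values where psi = +infinity, i.e. a sup is unbounded, do not affect the inf.) *)
Definition psitilde_set (E : (R -> R) -> R) (p h : R) : R -> Prop :=
  fun x => exists b1 b2 s2 s1, 0 < b1 /\ 0 < b2 /\
      is_lub (psi_r_set E h b2) s2 /\ is_lub (psi_l_set E h b1) s1 /\
      x = - (b1 + b2) * ln (1 - p) + (s2 + s1).

Definition is_glb (S : R -> Prop) (m : R) : Prop :=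
  (forall x, S x -> m <= x) /\ (forall m', (forall x, S x -> m' <= x) -> m' <= m).

From Stdlib Require Import Reals Lra.
Open Scope R_scope.

(* Both halves of psi have the form sup_{l>0} { l h - b ln F(l) } with
   F(l) = E(exp(l phi)) a moment generating function (phi = ln rho for the
   right half, phi = -ln rho for the left half), and F(k) = 1/(1-p) at the
   relevant exponent k (= kr or kl).
   - Lower bound: choosing l = k in the sup shows that every such sup is at
     least k h + b ln(1-p); summing both halves, the b-terms cancel against
     -(b1+b2) ln(1-p), so every element of the set is >= (kl + kr) h.
   - Attainment: ln F is convex, so F lies above its exponential tangent at k,
     F(l) >= F(k) exp(g (l-k)), with slope g = E(exp(k phi) phi)/F(k)
     (proved pointwise from exp y >= exp m (1 + y - m) and positivity of E).
     Since F(0) = 1 < F(k), g > 0, and for b = h/g the sup is attained at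
     l = k.  Taking these b for both halves gives an element equal to
     (kl + kr) h. *)

Section ContinuityOnSupport.

Variable eps0 : R.

Lemma contI_lincomb (a b : R) (f g : R -> R) :
  contI eps0 f -> contI eps0 g -> contI eps0 (fun x => a * f x + b * g x).
Proof.
  intros Hf Hg x Hx.
  apply (continuity_pt_plus (fun x => a * f x) (fun x => b * g x) x);
    apply continuity_pt_scal; auto.
Qed.

Lemma contI_mul (f g : R -> R) :
  contI eps0 f -> contI eps0 g -> contI eps0 (fun x => f x * g x).
Proof. intros Hf Hg x Hx. apply (continuity_pt_mult f g x); auto. Qed.

Lemma contI_opp (f : R -> R) : contI eps0 f -> contI eps0 (fun x => - f x).
Proof. intros Hf x Hx. apply (continuity_pt_opp f x); auto. Qed.

Lemma contI_exp_scal (l : R) (phi : R -> R) :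
  contI eps0 phi -> contI eps0 (fun x => exp (l * phi x)).
Proof.
  intros Hphi x Hx.
  apply (continuity_pt_comp (fun w => l * phi w) exp x).
  - apply continuity_pt_scal; auto.
  - apply derivable_continuous_pt, derivable_pt_exp.
Qed.

Lemma contI_ln_rho : 0 < eps0 -> contI eps0 (fun w => ln (rho w)).
Proof.
  intros Heps x [Hx1 Hx2].
  assert (Hrho : 0 < rho x) by (unfold rho; apply Rdiv_lt_0_compat; lra).
  apply (continuity_pt_comp rho ln x).
  - unfold rho. apply (continuity_pt_div (fun w => 1 - w) (fun w => w) x).
    + apply (continuity_pt_minus (fun _ => 1) (fun w => w) x).
      * apply continuity_pt_const. intros a b; reflexivity.
      * apply derivable_continuous_pt, derivable_pt_id.
    + apply derivable_continuous_pt, derivable_pt_id.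
    + lra.
  - apply derivable_continuous_pt. exists (/ rho x). apply derivable_pt_lim_ln; auto.
Qed.

End ContinuityOnSupport.

Lemma exp_tangent (m y : R) : exp m * (1 + (y - m)) <= exp y.
Proof.
  replace (exp y) with (exp m * exp (y - m)) by (rewrite <- exp_plus; f_equal; ring).
  apply Rmult_le_compat_l; [left; apply exp_pos | apply exp_ineq1_le].
Qed.

Section ExpectationFunctional.

Variables (eps0 : R) (E : (R -> R) -> R).
Hypothesis HE : law_functional eps0 E.

Lemma law_monotone (f g : R -> R) : contI eps0 f -> contI eps0 g ->
  (forall x, inI eps0 x -> g x <= f x) -> E g <= E f.
Proof.
  intros Hf Hg Hle.
  assert (Hdiff : 0 <= E (fun x => 1 * f x + (-1) * g x)).
  { apply (lf_pos _ _ HE).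
    - apply contI_lincomb; auto.
    - intros x Hx. specialize (Hle x Hx). lra. }
  rewrite (lf_linear _ _ HE 1 (-1) f g Hf Hg) in Hdiff. lra.
Qed.

Lemma mgf_at_0 (phi : R -> R) : E (fun w => exp (0 * phi w)) = 1.
Proof.
  rewrite <- (lf_one _ _ HE). apply (lf_local _ _ HE). intros x _.
  rewrite Rmult_0_l. apply exp_0.
Qed.

(* Log-convexity of the moment generating function: it lies above its
   exponential tangent at k, whose slope is the tilted mean of phi. *)
Lemma mgf_tangent_bound (phi : R -> R) (k l : R) : contI eps0 phi ->
  let A := E (fun w => exp (k * phi w)) in
  let B := E (fun w => exp (k * phi w) * phi w) in
  0 < A -> A * exp (B / A * (l - k)) <= E (fun w => exp (l * phi w)).
Proof.
  intros Hphi A B HA.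
  set (m := B / A * (l - k)).
  assert (HK : contI eps0 (fun w => exp (k * phi w))) by (apply contI_exp_scal; auto).
  assert (HKphi : contI eps0 (fun w => exp (k * phi w) * phi w))
    by (apply contI_mul; auto).
  (* pointwise: exp(l phi) = exp(k phi) exp((l-k) phi) >= exp(k phi) times the
     tangent of exp at m evaluated at (l-k) phi *)
  assert (Hpointwise :
    E (fun w => (exp m * (1 - m)) * exp (k * phi w)
                + (exp m * (l - k)) * (exp (k * phi w) * phi w))
    <= E (fun w => exp (l * phi w))).
  { apply law_monotone.
    - apply contI_exp_scal; auto.
    - apply contI_lincomb; auto.
    - intros x _.
      replace (exp (l * phi x)) with (exp (k * phi x) * exp ((l - k) * phi x))
        by (rewrite <- exp_plus; f_equal; ring).
      apply Rle_trans with (exp (k * phi x) * (exp m * (1 + ((l - k) * phi x - m)))).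
      + right; ring.
      + apply Rmult_le_compat_l; [left; apply exp_pos | apply exp_tangent]. }
  rewrite (lf_linear _ _ HE _ _ _ _ HK HKphi) in Hpointwise.
  fold A B in Hpointwise.
  replace (A * exp m) with (exp m * (1 - m) * A + exp m * (l - k) * B)
    by (unfold m; field; lra).
  exact Hpointwise.
Qed.

End ExpectationFunctional.

(* The values l h - b ln F(l), l > 0, whose supremum is a one-sided
   Legendre transform of ln F; psi_r_set and psi_l_set are instances. *)
Definition legendre_set (F : R -> R) (h b : R) : R -> Prop :=
  fun y => exists l, 0 < l /\ y = l * h - b * ln (F l).

Lemma legendre_lub_ge (F : R -> R) (h b k s : R) :
  0 < k -> is_lub (legendre_set F h b) s -> k * h - b * ln (F k) <= s.
Proof. intros Hk [Hub _]. apply Hub. exists k. split; auto. Qed.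

Lemma legendre_lub_tangent (F : R -> R) (h g k : R) :
  0 < h -> 0 < g -> 0 < k -> 0 < F k ->
  (forall l, F k * exp (g * (l - k)) <= F l) ->
  is_lub (legendre_set F h (h / g)) (k * h - h / g * ln (F k)).
Proof.
  intros Hh Hg Hk HFk Htangent. split.
  - intros y [l [Hl ->]].
    assert (Hln : ln (F k) + g * (l - k) <= ln (F l)).
    { rewrite <- (ln_exp (g * (l - k))), <- ln_mult by (auto; apply exp_pos).
      destruct (Rle_lt_or_eq_dec _ _ (Htangent l)) as [Hlt | Heq].
      - left. apply ln_increasing; auto.
        apply Rmult_lt_0_compat; [auto | apply exp_pos].
      - right. now rewrite Heq. }
    assert (Hb : 0 <= h / g) by (left; apply Rdiv_lt_0_compat; auto).
    apply Rmult_le_compat_l with (r := h / g) in Hln; [|exact Hb].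
    replace (h / g * (ln (F k) + g * (l - k)))
      with (h / g * ln (F k) + h * (l - k)) in Hln by (field; lra).
    lra.
  - intros b Hb. apply Hb. exists k. split; auto.
Qed.

Lemma tangent_slope_pos (F : R -> R) (g k : R) :
  0 < k -> F 0 = 1 -> 1 < F k ->
  (forall l, F k * exp (g * (l - k)) <= F l) -> 0 < g.
Proof.
  intros Hk HF0 HFk Htangent.
  destruct (Rlt_or_le 0 g) as [Hg | Hg]; auto. exfalso.
  specialize (Htangent 0). rewrite HF0 in Htangent.
  assert (Hexp : 1 <= exp (g * (0 - k))).
  { rewrite <- exp_0. destruct (Req_dec (g * (0 - k)) 0) as [Hz | Hz].
    - rewrite Hz; lra.
    - left. apply exp_increasing. nra. }
  assert (Hprod : F k * 1 <= F k * exp (g * (0 - k)))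
    by (apply Rmult_le_compat_l; lra).
  lra.
Qed.

Lemma one_sided_legendre (eps0 : R) (E : (R -> R) -> R) (phi F : R -> R)
  (h c k : R) :
  law_functional eps0 E -> contI eps0 phi ->
  (forall l, F l = E (fun w => exp (l * phi w))) ->
  0 < h -> 0 < k -> F k = c -> 1 < c ->
  (forall b s, is_lub (legendre_set F h b) s -> k * h - b * ln c <= s) /\
  (exists b, 0 < b /\ is_lub (legendre_set F h b) (k * h - b * ln c)).
Proof.
  intros HE Hphi HF Hh Hk HFk Hc.
  assert (HF0 : F 0 = 1) by (rewrite HF; apply (mgf_at_0 eps0 E HE)).
  set (g := E (fun w => exp (k * phi w) * phi w) / E (fun w => exp (k * phi w))).
  assert (Htangent : forall l, F k * exp (g * (l - k)) <= F l).
  { intros l. rewrite !HF. apply (mgf_tangent_bound eps0 E HE phi k l Hphi).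
    rewrite <- HF. lra. }
  assert (Hg : 0 < g) by (apply (tangent_slope_pos F g k); auto; lra).
  split.
  - intros b s Hs. rewrite <- HFk. apply legendre_lub_ge; auto.
  - exists (h / g). split; [apply Rdiv_lt_0_compat; auto|].
    rewrite <- HFk. apply legendre_lub_tangent; auto; lra.
Qed.

Theorem lemma3p2 (eps0 p kl kr : R) (E : (R -> R) -> R)
  (Heps : 0 < eps0) (HE : law_functional eps0 E) (Hnest : strict_nestling eps0 E)
  (Hp : 0 < p < 1)
  (Hkl : 0 < kl) (Hkl_eq : E (fun w => Rpower (rho w) (- kl)) = 1 / (1 - p))
  (Hkr : 0 < kr) (Hkr_eq : E (fun w => Rpower (rho w) kr) = 1 / (1 - p)) :
  forall h : R, 0 < h -> is_glb (psitilde_set E p h) ((kl + kr) * h).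
Proof.
  intros h Hh.
  assert (Hc : 1 < 1 / (1 - p))
    by (apply (Rmult_lt_reg_r (1 - p)); [lra | field_simplify; lra]).
  assert (Hlnc : ln (1 / (1 - p)) = - ln (1 - p))
    by (unfold Rdiv; rewrite Rmult_1_l; apply ln_Rinv; lra).
  (* right half: phi = ln rho, and Rpower (rho w) l is exp (l * ln (rho w)) *)
  destruct (one_sided_legendre eps0 E (fun w => ln (rho w))
              (fun l => E (fun w => Rpower (rho w) l)) h (1 / (1 - p)) kr
              HE (contI_ln_rho eps0 Heps) (fun l => eq_refl) Hh Hkr Hkr_eq Hc)
    as [Hr_ge [br [Hbr Hr_lub]]].
  assert (HFl : forall l, E (fun w => Rpower (rho w) (- l))
                          = E (fun w => exp (l * - ln (rho w)))).
  { intros l. apply (lf_local _ _ HE). intros x _. unfold Rpower. f_equal. ring. }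
  destruct (one_sided_legendre eps0 E (fun w => - ln (rho w))
              (fun l => E (fun w => Rpower (rho w) (- l))) h (1 / (1 - p)) kl
              HE (contI_opp eps0 _ (contI_ln_rho eps0 Heps)) HFl Hh Hkl Hkl_eq Hc)
    as [Hl_ge [bl [Hbl Hl_lub]]].
  split.
  - intros x [b1 [b2 [s2 [s1 [Hb1 [Hb2 [Hs2 [Hs1 ->]]]]]]]].
    specialize (Hr_ge b2 s2 Hs2). specialize (Hl_ge b1 s1 Hs1).
    rewrite Hlnc in Hr_ge, Hl_ge. lra.
  - intros m Hm.
    replace ((kl + kr) * h) with
      (- (bl + br) * ln (1 - p)
       + ((kr * h - br * ln (1 / (1 - p))) + (kl * h - bl * ln (1 / (1 - p)))))
      by (rewrite Hlnc; ring).
    apply Hm. exists bl, br, (kr * h - br * ln (1 / (1 - p))),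
                      (kl * h - bl * ln (1 / (1 - p))).
    do 2 (split; [assumption|]). split; [exact Hr_lub | split; [exact Hl_lub | reflexivity]].
Qed.
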